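(* For every finite graph $G$: (1) $\widetilde{\omega}(G) \leq \widetilde{\Delta}(G)$, unless $\widetilde{G}$ is edgeless (in which case $\widetilde{\omega}(G) \leq 1$ and $\widetilde{\Delta}(G) = 0$); (2) $\mathsf{cideg}(G) \leq 3^{\lceil \widetilde{\Delta}(G)/3\rceil}$; (3) $\widetilde{\Delta}(G) \leq \mathsf{cideg}(G) \cdot (\widetilde{\omega}(G) - 1)$.
   Context: Two vertices of $G$ are equivalent if they lie in exactly the same maximal cliques of $G$. The clique-quotient graph $\widetilde{G}$ has the equivalence classes as vertices, two distinct classes adjacent iff their representatives are adjacent in $G$. $\widetilde{\Delta}(G)$ is the maximum degree of $\widetilde{G}$. $\widetilde{\omega}(G)$ is the maximum over maximal cliques $K$ of the number of equivalence classes meeting $K$; $\mathsf{cideg}(G)$ is the maximum over vertices $v$ of the number of maximal cliques of $G$ containing $v$. *)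

(* A finite simple graph is a symmetric irreflexive
   relation e on a finType T. *)
From mathcomp Require Import all_boot.
Set Implicit Arguments. Unset Strict Implicit. Unset Printing Implicit Defensive.

Section CliqueQuotient.
Variables (T : finType) (e : rel T).

Definition clique (K : {set T}) : bool :=
  [forall x in K, forall y in K, (x != y) ==> e x y].

Definition maxclique (K : {set T}) : bool := maxset clique K.

Definition maxcliques : {set {set T}} := [set K | maxclique K].

Definition cq_equiv (u v : T) : bool :=
  [forall K in maxcliques, (u \in K) == (v \in K)].

Definition cq_class (v : T) : {set T} := [set u | cq_equiv u v].

(* degree of the class of v in the clique-quotient graph: number of classes
   distinct from the class of v containing a neighbour of v *)
Definition cq_deg (v : T) : nat :=
  #|[set cq_class w | w in [set w | e v w & cq_class w != cq_class v]]|.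

Definition cq_Delta : nat := \max_(v : T) cq_deg v.

Definition cq_omega : nat :=
  \max_(K in maxcliques) #|[set cq_class v | v in K]|.

Definition cideg : nat :=
  \max_(v : T) #|[set K in maxcliques | v \in K]|.

Definition cq_edgeless : Prop :=
  forall v w : T, e v w -> cq_class v = cq_class w.

End CliqueQuotient.

(* Equivalent vertices are adjacent and have the same neighbours, so adjacency
   of classes does not depend on representatives.  Hence sending a maximal
   clique K through v to its classes other than that of v lands in the maximal
   cliques of the quotient neighbourhood of v, a graph on at most Delta~
   vertices, and this map is injective because a maximal clique is a union of
   classes.  The Moon-Moser bound 3 ^ (n / 3) on the number of maximal cliques
   of an n-vertex graph gives (2).  Every class adjacent to that of v lies in
   one of these traces, each with at most omega~ - 1 classes, which gives (3).
   For (1), if some x in K has a neighbour w outside K, the classes of K other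
   than that of x, with that of w, are distinct neighbours of the class of x;
   otherwise K is the only maximal clique through its vertices and is a single
   class. *)

From mathcomp Require Import all_boot zify.
Set Implicit Arguments. Unset Strict Implicit. Unset Printing Implicit Defensive.

Lemma leq_card_bigcup (I U : finType) (P : pred I) (F : I -> {set U}) :
  #|\bigcup_(i | P i) F i| <= \sum_(i | P i) #|F i|.
Proof.
apply: (big_ind2 (fun (S : {set U}) n => #|S| <= n)) => [|A m B n leAm leBn|//].
  by rewrite cards0.
by rewrite (leq_trans (leq_card_setU A B)) ?leq_add.
Qed.

Lemma cube_le_exp3 k : k ^ 3 <= 3 ^ k.
Proof.
elim: k => [//|k IHk]; have [|k_ge3] := ltnP k 3.
  by case: k {IHk} => [|[|[|]]].
rewrite [3 ^ k.+1]expnS; apply: (leq_trans _ (leq_mul (leqnn 3) IHk)).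
rewrite !expnS expn0; nia.
Qed.

Section MaximalCliques.
Variables (U : finType) (r : rel U).

Lemma cliqueP (X : {set U}) :
  reflect {in X &, forall x y, x != y -> r x y} (clique r X).
Proof.
apply: (iffP forall_inP) => [cX x y xX yX | cX x xX].
  by move/forall_inP/(_ y yX)/implyP: (cX x xX).
by apply/forall_inP => y yX; apply/implyP; apply: cX.
Qed.

Lemma subset_clique (X Y : {set U}) : X \subset Y -> clique r Y -> clique r X.
Proof.
by move/subsetP=> sXY /cliqueP cY; apply/cliqueP => x y /sXY xY /sXY; apply: cY.
Qed.

Lemma clique_set1 u : clique r [set u].
Proof. by apply/cliqueP => x y /set1P-> /set1P->; rewrite eqxx. Qed.

Hypothesis r_sym : symmetric r.

Lemma cliqueU1 u (X : {set U}) :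
  {in X, forall x, x != u -> r u x} -> clique r X -> clique r (u |: X).
Proof.
move=> ruX /cliqueP cX; apply/cliqueP => x y /setU1P[->|xX] /setU1P[->|yX] nxy.
- by rewrite eqxx in nxy.
- by apply: ruX; rewrite // eq_sym.
- by rewrite r_sym; apply: ruX.
- exact: cX.
Qed.

Definition clique_in (A X : {set U}) : bool := (X \subset A) && clique r X.

Definition maxcliques_in (A : {set U}) : {set {set U}} :=
  [set X | maxset (clique_in A) X].

Lemma maxcliques_inP (A X : {set U}) :
  reflect [/\ X \subset A, clique r X &
           forall Y : {set U}, Y \subset A -> clique r Y -> X \subset Y -> Y = X]
          (X \in maxcliques_in A).
Proof.
rewrite inE; apply: (iffP maxsetP) => [[/andP[sXA cX] maxX] | [sXA cX maxX]].
  by split=> // Y sYA cY; apply: maxX; apply/andP.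
by split=> [|Y /andP[]]; [apply/andP | apply: maxX].
Qed.

Definition adj_in (A : {set U}) u := [set w in A | (w != u) && r u w].
Definition nonadj_in (A : {set U}) u := [set w in A | (w == u) || ~~ r u w].

Lemma card_nonadj_adj_in (A : {set U}) u : #|A| = #|nonadj_in A u| + #|adj_in A u|.
Proof.
rewrite -(cardsID [set w | (w == u) || ~~ r u w] A); congr (_ + _).
  by apply: eq_card => w; rewrite !inE.
by apply: eq_card => w; rewrite !inE negb_or negbK andbC.
Qed.

Lemma maxclique_in_meets_nonadj (A X : {set U}) v :
  v \in A -> X \in maxcliques_in A -> exists2 u, u \in nonadj_in A v & u \in X.
Proof.
move=> vA /maxcliques_inP[sXA cX maxX].
apply/exists_inP; apply: contraT => /exists_inPn nonadjX.
have adjX x : x \in X -> x != v -> r v x.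
  move=> xX; move: (contraL (nonadjX x) xX).
  by rewrite inE (subsetP sXA) //= negb_or negbK => /andP[].
have vX : v \in X.
  rewrite -(maxX (v |: X)) ?setU11 ?subsetUr ?cliqueU1 //.
  by rewrite subUset sub1set vA.
by move: (contraL (nonadjX v) vX); rewrite inE vA eqxx.
Qed.

Lemma maxcliques_in_setD1 (A X : {set U}) u :
  X \in maxcliques_in A -> u \in X -> X :\ u \in maxcliques_in (adj_in A u).
Proof.
move=> /maxcliques_inP[sXA cX maxX] uX; apply/maxcliques_inP; split.
- apply/subsetP => w /setD1P[nwu wX]; rewrite inE (subsetP sXA) // nwu /=.
  by move/cliqueP: cX; apply; rewrite // eq_sym.
- exact: subset_clique (subsetDl X _) cX.
- move=> Y sYA cY sXY.
  have adjY w : w \in Y -> [&& w \in A, w != u & r u w].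
    by move/(subsetP sYA); rewrite inE.
  have uY : u \notin Y by apply/negP => /adjY; rewrite eqxx andbF.
  have <- : u |: Y = X.
    apply: maxX; last by rewrite -{1}(setD1K uX) setUS.
    + rewrite subUset sub1set (subsetP sXA) //=.
      by apply/subsetP => w /adjY /andP[].
    + by apply: cliqueU1 cY => x /adjY /and3P[].
  by rewrite setU1K.
Qed.

Lemma card_maxcliques_in_through_le (A : {set U}) u :
  #|[set X in maxcliques_in A | u \in X]| <= #|maxcliques_in (adj_in A u)|.
Proof.
have injD1 : {in [set X in maxcliques_in A | u \in X] &, injective (fun X => X :\ u)}.
  move=> X1 X2; rewrite !inE => /andP[_ uX1] /andP[_ uX2] eqX12.
  by rewrite -(setD1K uX1) -(setD1K uX2) eqX12.
rewrite -(card_in_imset injD1); apply/subset_leq_card/subsetP => Y /imsetP[X].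
by rewrite inE => /andP[XA uX] ->; apply: maxcliques_in_setD1.
Qed.

Lemma card_maxcliques_in_le_sum (A : {set U}) v : v \in A ->
  #|maxcliques_in A| <= \sum_(u in nonadj_in A v) #|maxcliques_in (adj_in A u)|.
Proof.
move=> vA; pose through u := [set X in maxcliques_in A | u \in X].
have cover : maxcliques_in A \subset \bigcup_(u in nonadj_in A v) through u.
  apply/subsetP => X XA; have [u uN uX] := maxclique_in_meets_nonadj vA XA.
  by apply/bigcupP; exists u; rewrite // inE XA.
apply: leq_trans (subset_leq_card cover) _; apply: leq_trans (leq_card_bigcup _ _) _.
by apply: leq_sum => u _; apply: card_maxcliques_in_through_le.
Qed.

(* Moon-Moser, cubed to stay in nat: every maximal clique contains one of the d
   non-neighbours u of a vertex v with fewest non-neighbours, and loses u to a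
   maximal clique of the neighbourhood of u, which has at most #|A| - d
   vertices; conclude with d ^ 3 <= 3 ^ d. *)
Theorem card_maxcliques_in (A : {set U}) : #|maxcliques_in A| ^ 3 <= 3 ^ #|A|.
Proof.
have [n ltAn] := ubnP #|A|; elim: n => // n IHn in A ltAn *.
have [-> | [a aA]] := set_0Vmem A.
  suff : #|maxcliques_in set0| <= 1 by rewrite cards0; case: #|_| => [|[]].
  rewrite -(cards1 (set0 : {set U})).
  apply/subset_leq_card/subsetP => X /maxcliques_inP[].
  by rewrite subset0 inE.
have [v vA minv] : exists2 v, v \in A &
    forall u, u \in A -> #|nonadj_in A v| <= #|nonadj_in A u|.
  by case: (arg_minnP (fun u => #|nonadj_in A u|) aA) => v; exists v.
set d := #|nonadj_in A v|.
have vN : v \in nonadj_in A v by rewrite inE vA eqxx.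
have [m mN maxm] : exists2 m, m \in nonadj_in A v & forall u, u \in nonadj_in A v ->
    #|maxcliques_in (adj_in A u)| <= #|maxcliques_in (adj_in A m)|.
  by case: (arg_maxnP (fun u => #|maxcliques_in (adj_in A u)|) vN) => m; exists m.
set M := #|maxcliques_in (adj_in A m)|.
have le_MCA : #|maxcliques_in A| <= d * M.
  apply: leq_trans (card_maxcliques_in_le_sum vA) _.
  by rewrite -sum_nat_const leq_sum.
have le_adj_m : #|adj_in A m| + d <= #|A|.
  have mA : m \in A by move: mN; rewrite inE => /andP[].
  by rewrite (card_nonadj_adj_in A m) addnC leq_add2r minv.
have d_gt0 : 0 < d by apply/card_gt0P; exists v.
have IHm : M ^ 3 <= 3 ^ #|adj_in A m| by apply: IHn; lia.
apply: (@leq_trans ((d * M) ^ 3)); first by rewrite leq_exp2r.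
rewrite expnMn; apply: (@leq_trans (3 ^ d * 3 ^ #|adj_in A m|)).
  by rewrite leq_mul // cube_le_exp3.
by rewrite -expnD leq_exp2l // addnC.
Qed.

End MaximalCliques.

Section CliqueQuotient.
Variables (T : finType) (e : rel T).
Hypothesis e_sym : symmetric e.

Lemma cq_equivP u v :
  reflect (forall K, maxclique e K -> (u \in K) = (v \in K)) (cq_equiv e u v).
Proof.
apply: (iffP forall_inP) => [equv K maxK | equv K].
  by apply/eqP/equv; rewrite inE.
by rewrite inE => maxK; rewrite equv.
Qed.

Lemma cq_equiv_refl u : cq_equiv e u u.
Proof. exact/cq_equivP. Qed.

Lemma cq_class_eqP u v : reflect (cq_class e u = cq_class e v) (cq_equiv e u v).
Proof.
apply: (iffP idP) => [/cq_equivP equv | equv]; last first.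
  have : u \in cq_class e u by rewrite inE cq_equiv_refl.
  by rewrite equv inE.
apply/setP => w; rewrite !inE.
by apply/cq_equivP/cq_equivP => eqw K maxK; rewrite eqw // equv.
Qed.

Lemma maxclique_exists (C : {set T}) :
  clique e C -> exists2 K, maxclique e K & C \subset K.
Proof. by case/maxset_exists => K; exists K. Qed.

Lemma clique_set2 u w : e u w -> clique e [set u; w].
Proof.
move=> euw; apply/cliqueP => x y; rewrite !inE.
by do 2![case/orP=> /eqP->]; rewrite ?eqxx // e_sym.
Qed.

Lemma mem_maxclique_cq_equiv K u w :
  maxclique e K -> u \in K -> cq_equiv e w u -> w \in K.
Proof. by move=> maxK uK /cq_equivP ->. Qed.

Lemma cq_equiv_nbr u v w : cq_equiv e u v -> e u w -> w != v -> e v w.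
Proof.
move=> equv euw nwv; have [K maxK sK] := maxclique_exists (clique_set2 euw).
have [uK wK] : u \in K /\ w \in K by rewrite !(subsetP sK) // !inE eqxx ?orbT.
have vK : v \in K by rewrite -(cq_equivP _ _ equv K maxK).
by move/maxsetp/cliqueP: maxK; apply; rewrite // eq_sym.
Qed.

Lemma cq_equiv_edge u v : cq_equiv e u v -> u != v -> e u v.
Proof.
move=> equv nuv; have [K maxK sK] := maxclique_exists (clique_set1 e u).
have uK : u \in K by rewrite (subsetP sK) ?set11.
have vK : v \in K by rewrite -(cq_equivP _ _ equv K maxK).
by move/maxsetp/cliqueP: maxK; apply.
Qed.

Lemma cq_equiv_lift_edge a b u w :
  cq_equiv e a u -> cq_equiv e b w -> e a b -> u != w -> e u w.
Proof.
move=> equ eqw eab nuw; have [ebu | nbu] := eqVneq b u.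
  by rewrite -ebu in nuw *; apply: cq_equiv_edge.
have eub : e u b := cq_equiv_nbr equ eab nbu.
by rewrite e_sym; apply: cq_equiv_nbr eqw _ nuw; rewrite e_sym.
Qed.

Definition cq_rel : rel {set T} :=
  fun C D => (C != D) && [exists x in C, exists y in D, e x y].

Lemma cq_rel_sym : symmetric cq_rel.
Proof.
move=> C D; rewrite /cq_rel eq_sym; congr (_ && _).
by apply/exists_inP/exists_inP => -[x xC /exists_inP[y yD exy]];
  exists y => //; apply/exists_inP; exists x; rewrite // e_sym.
Qed.

Definition cq_classes (K : {set T}) : {set {set T}} := [set cq_class e w | w in K].

Definition cq_nbhd v : {set {set T}} :=
  cq_classes [set w | e v w & cq_class e w != cq_class e v].

Definition cq_trace v K : {set {set T}} := cq_classes K :\ cq_class e v.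

Lemma mem_cq_classes (K : {set T}) w : w \in K -> cq_class e w \in cq_classes K.
Proof. exact: imset_f. Qed.

Lemma cq_classesE v (K : {set T}) :
  v \in K -> cq_classes K = cq_class e v |: cq_trace v K.
Proof. by move/mem_cq_classes/setD1K. Qed.

Lemma cq_rel_edge u w : cq_rel (cq_class e u) (cq_class e w) -> u != w -> e u w.
Proof.
case/andP=> _ /exists_inP[a + /exists_inP[b + eab]]; rewrite !inE => au bw.
exact: cq_equiv_lift_edge au bw eab.
Qed.

Lemma cq_trace_sub_nbhd v K :
  maxclique e K -> v \in K -> cq_trace v K \subset cq_nbhd v.
Proof.
move=> /maxsetp/cliqueP cK vK; apply/subsetP => C /setD1P[nwv /imsetP[w wK eC]].
rewrite eC in nwv *; rewrite mem_cq_classes // inE nwv andbT cK //.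
by apply: contraNneq nwv => <-.
Qed.

Lemma cq_trace_maxclique v K :
  maxclique e K -> v \in K -> cq_trace v K \in maxcliques_in cq_rel (cq_nbhd v).
Proof.
move=> maxK vK; have /cliqueP cK := maxsetp maxK.
apply/maxcliques_inP; split; first exact: cq_trace_sub_nbhd.
  apply/cliqueP => _ _ /setD1P[_ /imsetP[y yK ->]] /setD1P[_ /imsetP[z zK ->]] nyz.
  rewrite /cq_rel nyz; apply/exists_inP; exists y; rewrite ?inE ?cq_equiv_refl //.
  apply/exists_inP; exists z; rewrite ?inE ?cq_equiv_refl // cK //.
  by apply: contraNneq nyz => ->.
move=> Y sYN /cliqueP cY sTY; apply/eqP; rewrite eqEsubset sTY andbT.
apply/subsetP => C CY; have := subsetP sYN C CY.
case/imsetP=> w; rewrite inE => /andP[evw nwv] eC; rewrite eC in CY *.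
have wK : w \in K.
  suff <- : w |: K = K by apply: setU11.
  apply: (maxsetsup maxK); last exact: subsetUr.
  apply: (cliqueU1 e_sym) (maxsetp maxK) => x xK nxw.
  rewrite e_sym; have [exv | nxv] := eqVneq (cq_class e x) (cq_class e v).
    by apply: (cq_equiv_lift_edge (a := v) (b := w)); rewrite ?cq_equiv_refl //;
      apply/cq_class_eqP.
  have [/cq_class_eqP exw | nxw'] := eqVneq (cq_class e x) (cq_class e w).
    exact: cq_equiv_edge.
  apply: (cq_rel_edge _ nxw); apply: cY => //.
  by apply: (subsetP sTY); rewrite !inE nxv mem_cq_classes.
by rewrite !inE nwv mem_cq_classes.
Qed.

Lemma cq_classes_subset_maxclique K1 K2 :
  maxclique e K2 -> cq_classes K1 \subset cq_classes K2 -> K1 \subset K2.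
Proof.
move=> maxK2 /subsetP sK12; apply/subsetP => y yK1.
have /imsetP[z zK2 /cq_class_eqP eqyz] := sK12 _ (mem_cq_classes yK1).
exact: mem_maxclique_cq_equiv zK2 eqyz.
Qed.

Lemma cq_trace_inj v :
  {in [set K in maxcliques e | v \in K] &, injective (cq_trace v)}.
Proof.
move=> K1 K2; rewrite !inE => /andP[maxK1 vK1] /andP[maxK2 vK2] eqT.
have eqC : cq_classes K1 = cq_classes K2.
  by rewrite (cq_classesE vK1) (cq_classesE vK2) eqT.
by apply/eqP; rewrite eqEsubset !cq_classes_subset_maxclique // eqC.
Qed.

Lemma card_maxcliques_through_le_nbhd v :
  #|[set K in maxcliques e | v \in K]| <= #|maxcliques_in cq_rel (cq_nbhd v)|.
Proof.
rewrite -(card_in_imset (@cq_trace_inj v)); apply/subset_leq_card/subsetP.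
move=> C /imsetP[K /setIdP[maxK vK] ->].
by apply: cq_trace_maxclique vK; rewrite inE in maxK.
Qed.

Lemma card_cq_nbhd_le_Delta v : #|cq_nbhd v| <= cq_Delta e.
Proof. exact: (leq_bigmax (F := cq_deg e) v). Qed.

Lemma card_maxcliques_through_le_cideg v :
  #|[set K in maxcliques e | v \in K]| <= cideg e.
Proof. exact: (leq_bigmax (F := fun v => #|[set K in maxcliques e | v \in K]|) v). Qed.

Lemma card_cq_classes_le_omega K : maxclique e K -> #|cq_classes K| <= cq_omega e.
Proof.
move=> maxK; apply: (leq_bigmax_cond (F := fun K => #|cq_classes K|)).
by rewrite inE.
Qed.

Lemma card_cq_classes_le_nbhd K x w :
  maxclique e K -> x \in K -> e x w -> w \notin K -> #|cq_classes K| <= #|cq_nbhd x|.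
Proof.
move=> maxK xK exw wK.
have nwK z : z \in K -> cq_class e w != cq_class e z.
  by move=> zK; apply: contra wK => /eqP/cq_class_eqP; apply: mem_maxclique_cq_equiv.
have wT : cq_class e w \notin cq_trace x K.
  by apply/negP => /setD1P[_ /imsetP[z zK /eqP]]; apply/negP/nwK.
have -> : #|cq_classes K| = #|cq_class e w |: cq_trace x K|.
  by rewrite (cq_classesE xK) !cardsU1 setD11 wT.
apply/subset_leq_card; rewrite subUset sub1set cq_trace_sub_nbhd // andbT.
by rewrite mem_cq_classes // inE exw nwK.
Qed.

Lemma card_cq_classes_closed K :
  maxclique e K -> {in K, forall x w, e x w -> w \in K} -> #|cq_classes K| <= 1.
Proof.
move=> maxK closedK; have [-> | [x xK]] := set_0Vmem K.
  by rewrite /cq_classes imset0 cards0.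
have meetK K' z : maxclique e K' -> z \in K -> z \in K' -> K' = K.
  move=> maxK' zK zK'; apply/esym/(maxsetsup maxK' (maxsetp maxK)).
  apply/subsetP => y yK'; have [-> // | nyz] := eqVneq y z.
  by apply: closedK zK _ (cliqueP _ _ (maxsetp maxK') _ _ zK' yK' _); rewrite eq_sym.
rewrite -(cards1 (cq_class e x)); apply/subset_leq_card/subsetP => _ /imsetP[y yK ->].
rewrite inE; apply/eqP/cq_class_eqP/cq_equivP => K' maxK'.
by apply/idP/idP => [/(meetK K' y maxK' yK) | /(meetK K' x maxK' xK)] ->.
Qed.

Lemma cq_Delta_gt0 : ~ cq_edgeless e -> 0 < cq_Delta e.
Proof.
move=> nE; rewrite lt0n; apply/eqP => Delta0; apply: nE => v w evw.
apply/eqP; apply: contraT => nvw.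
have : cq_class e w \in cq_nbhd v by rewrite mem_cq_classes // inE evw eq_sym.
have := card_cq_nbhd_le_Delta v; rewrite Delta0 leqn0 cards_eq0 => /eqP->.
by rewrite inE.
Qed.

Lemma card_cq_classes_le_Delta K :
  ~ cq_edgeless e -> maxclique e K -> #|cq_classes K| <= cq_Delta e.
Proof.
move=> nE maxK.
have [| closedK] := boolP [exists x in K, [exists w, e x w && (w \notin K)]].
  case/exists_inP=> x xK /existsP[w /andP[exw wK]].
  exact: leq_trans (card_cq_classes_le_nbhd maxK xK exw wK) (card_cq_nbhd_le_Delta x).
apply: leq_trans (cq_Delta_gt0 nE); apply: card_cq_classes_closed => // x xK w exw.
move: closedK; apply: contraNT => wK; apply/exists_inP; exists x => //.
by apply/existsP; exists w; rewrite exw.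
Qed.

Lemma cq_omega_le_Delta : ~ cq_edgeless e -> cq_omega e <= cq_Delta e.
Proof.
by move=> nE; apply/bigmax_leqP => K; rewrite inE; apply: card_cq_classes_le_Delta.
Qed.

Lemma cq_edgeless_omega_Delta : cq_edgeless e -> cq_omega e <= 1 /\ cq_Delta e = 0.
Proof.
move=> E; split.
  apply/bigmax_leqP => K; rewrite inE => maxK.
  apply: card_cq_classes_closed => // x xK w /E /esym/cq_class_eqP.
  exact: mem_maxclique_cq_equiv.
apply/eqP; rewrite -leqn0; apply/bigmax_leqP => v _.
rewrite leqn0 cards_eq0; apply/eqP/setP => C; rewrite inE.
by apply/imsetP => -[w]; rewrite inE => /andP[/E-> ]; rewrite eqxx.
Qed.

Lemma cideg_le_exp3 : cideg e <= 3 ^ ((cq_Delta e + 2) %/ 3).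
Proof.
apply/bigmax_leqP => v _; rewrite -(@leq_exp2r _ _ 3) // -expnM.
apply: leq_trans (_ : #|maxcliques_in cq_rel (cq_nbhd v)| ^ 3 <= _).
  by rewrite leq_exp2r // card_maxcliques_through_le_nbhd.
apply: leq_trans (card_maxcliques_in cq_rel_sym _) _.
by rewrite leq_exp2l //; apply: leq_trans (card_cq_nbhd_le_Delta v) _; lia.
Qed.

Lemma cq_nbhd_sub_traces v :
  cq_nbhd v \subset \bigcup_(K in [set K in maxcliques e | v \in K]) cq_trace v K.
Proof.
apply/subsetP => C /imsetP[w /setIdP[evw nwv] ->].
have [K maxK sK] := maxclique_exists (clique_set2 evw).
have [vK wK] : v \in K /\ w \in K by rewrite !(subsetP sK) // !inE eqxx ?orbT.
by apply/bigcupP; exists K; rewrite !inE ?maxK ?vK // nwv mem_cq_classes.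
Qed.

Lemma card_cq_trace_le_omega v K :
  maxclique e K -> v \in K -> #|cq_trace v K| <= cq_omega e - 1.
Proof.
move=> maxK vK; have := card_cq_classes_le_omega maxK.
rewrite (cardsD1 (cq_class e v)) mem_cq_classes // add1n.
by move/(leq_sub2r 1); rewrite subSS subn0.
Qed.

Lemma cq_Delta_le_cideg_omega : cq_Delta e <= cideg e * (cq_omega e - 1).
Proof.
apply/bigmax_leqP => v _; apply: leq_trans (subset_leq_card (cq_nbhd_sub_traces v)) _.
apply: leq_trans (leq_card_bigcup _ _) _.
apply: (@leq_trans (\sum_(K in [set K in maxcliques e | v \in K]) (cq_omega e - 1))).
  by apply: leq_sum => K /setIdP[maxK vK]; apply: card_cq_trace_le_omega; rewrite -?inE.
by rewrite sum_nat_const leq_mul2r card_maxcliques_through_le_cideg orbT.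
Qed.

End CliqueQuotient.

Theorem lemma3p4 (T : finType) (e : rel T)
    (e_sym : symmetric e) (e_irr : irreflexive e) :
  [/\ (~ cq_edgeless e -> cq_omega e <= cq_Delta e),
      (cq_edgeless e -> cq_omega e <= 1 /\ cq_Delta e = 0),
      cideg e <= 3 ^ ((cq_Delta e + 2) %/ 3)
    & cq_Delta e <= cideg e * (cq_omega e - 1)].
Proof.
split.
- exact: cq_omega_le_Delta.
- exact: cq_edgeless_omega_Delta.
- exact: cideg_le_exp3.
- exact: cq_Delta_le_cideg_omega.
Qed.
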